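(* If $\mathcal D$ is an edge-independent unbounded probabilistic graph (i.e. $\mathcal D$ belongs to the class of edge-independent graphs defined in the context), then $\mathcal D\notin\mathsf{sjfCQ}(\mathsf{BID})$.
   Context: Fix a countably infinite universe $U$ equipped with a linear order $<$. Facts are $R(u_1,\dots,u_{\mathrm{ar}(R)})$ with $R$ from a finite schema and $u_i\in U$; instances are finite sets of facts; $\mathrm{adom}(D)$ is the set of elements of $U$ occurring in $D$. A probabilistic database (PDB) is a discrete probability space $(\mathbb D,P)$ with $\mathbb D$ a nonempty countable set of instances; its possible worlds are instances of positive probability and $\mathrm{facts}(\mathcal D)$ is their union. A graph database is an instance over a single binary relation $E$; it is simple if it has no fact $E(a,a)$ and undirected if $E(a,b)\in D$ implies $E(b,a)\in D$. The class of edge-independent graphs consists of the PDBs $\mathcal D$ such that: every possible world is a simple undirected graph database; for every sequence of pairwise distinct two-element subsets $\{a_1,b_1\},\dots,\{a_k,b_k\}$ of $U$, $\Pr_{D\sim\mathcal D}(E(a_i,b_i)\in D\text{ for all }i)=\prod_i\Pr_{D\sim\mathcal D}(E(a_i,b_i)\in D)$; and for every $n\in\mathbb N$ there is a possible world $D$ with $|D|>n$. A PDB $\mathcal I$ is block-independent disjoint ($\mathsf{BID}$) if $\mathrm{facts}(\mathcal I)$ can be partitioned into blocks such that facts $f_1,\dots,f_k$ from pairwise different blocks satisfy $\Pr(f_1\in I,\dots,f_k\in I)=\prod_i\Pr(f_i\in I)$ and distinct facts $f,f'$ of the same block satisfy $\Pr(f\in I\text{ and }f'\in I)=0$. A self-join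 free conjunctive query is a formula built from relational atoms $R(\bar u)$ ($\bar u$ variables or constants) and equality atoms using only $\exists,\wedge$, with each relation symbol occurring at most once, evaluated under active domain semantics; an sjfCQ-view consists of one such formula $\Phi_R(x_1,\dots,x_{\mathrm{ar}(R)})$ per output relation $R$, mapping $D$ to the instance of all $R(\bar a)$ with $\bar a$ over $\mathrm{adom}(D)\cup\mathrm{adom}(\Phi_R)$ and $D\models\Phi_R[\bar a]$. The image of a PDB under a view $V$ is the push-forward distribution on $V(\mathbb D)$, and $\mathsf{sjfCQ}(\mathsf{BID})$ is the class of images of BID-PDBs under sjfCQ-views. *)

From HB Require Import structures.
From mathcomp Require Import all_boot all_order all_algebra.
From mathcomp Require Import finmap.
From mathcomp Require Import boolp classical_sets reals constructive_ereal ereal esum.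

Set Implicit Arguments.
Unset Strict Implicit.
Unset Printing Implicit Defensive.

Import Order.TTheory GRing.Theory Num.Theory.

Local Open Scope ring_scope.

Section PDB.
Variables (U : countType) (R : realType).

Section Dist.
Variable T : choiceType.

(* a probabilistic database, identified with its probability mass function;
   the sample space is all of T (a countable type), worlds of probability
   0 are irrelevant. *)
Definition is_pdb (P : T -> R) : Prop :=
  (forall D, 0 <= P D) /\ (\esum_(D in [set: T]) (P D)%:E = 1%E).

Definition Pr (P : T -> R) (A : set T) : R := fine (\esum_(D in A) (P D)%:E).

End Dist.

Section Schema.
Variables (S : finType) (ar : S -> nat).

Definition fact := {Rs : S & (ar Rs).-tuple U}.
Definition instance := {fset fact}.

Definition facts_of (P : instance -> R) (f : fact) : Prop :=
  exists D : instance, 0 < P D /\ f \in D.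

Definition is_BID (P : instance -> R) : Prop :=
  is_pdb P /\
  exists blk : fact -> fact, (* blocks = fibres of blk restricted to facts(P) *)
    (forall fs : seq fact,
        (forall f, f \in fs -> facts_of P f) ->
        uniq (map blk fs) ->
        Pr P [set D | forall f, f \in fs -> f \in D]
          = \prod_(f <- fs) Pr P [set D | f \in D]) /\
    (forall f f' : fact, facts_of P f -> facts_of P f' -> f != f' ->
        blk f = blk f' -> Pr P [set D | f \in D /\ f' \in D] = 0).

Inductive term := TVar of nat | TConst of U.

Inductive cq :=
| Atom of S & seq term
| Equal of term & term
| And of cq & cq
| Ex of nat & cq.

Definition teval (nu : nat -> U) (t : term) : U :=
  match t with TVar n => nu n | TConst u => u end.

Definition tconst (t : term) : seq U :=
  match t with TVar _ => [::] | TConst u => [:: u] end.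

Definition tvar (t : term) : seq nat :=
  match t with TVar n => [:: n] | TConst _ => [::] end.

Fixpoint consts (phi : cq) : seq U :=
  match phi with
  | Atom _ ts => flatten (map tconst ts)
  | Equal t1 t2 => tconst t1 ++ tconst t2
  | And p q => consts p ++ consts q
  | Ex _ p => consts p
  end.

Fixpoint fv (phi : cq) : seq nat :=
  match phi with
  | Atom _ ts => flatten (map tvar ts)
  | Equal t1 t2 => tvar t1 ++ tvar t2
  | And p q => fv p ++ fv q
  | Ex x p => seq.filter (fun y => y != x) (fv p)
  end.

Fixpoint rels (phi : cq) : seq S :=
  match phi with
  | Atom Rs _ => [:: Rs]
  | Equal _ _ => [::]
  | And p q => rels p ++ rels q
  | Ex _ p => rels p
  end.

Fixpoint wf_cq (phi : cq) : bool :=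
  match phi with
  | Atom Rs ts => size ts == ar Rs
  | Equal _ _ => true
  | And p q => wf_cq p && wf_cq q
  | Ex _ p => wf_cq p
  end.

Definition sjf (phi : cq) : bool := wf_cq phi && uniq (rels phi).

Definition adom (D : instance) : seq U :=
  flatten (map (fun f : fact => tval (projT2 f)) (enum_fset D)).

Fixpoint sat (D : instance) (dom : seq U) (nu : nat -> U) (phi : cq) : bool :=
  match phi with
  | Atom Rs ts =>
      has (fun f : fact => (projT1 f == Rs) && (tval (projT2 f) == map (teval nu) ts))
          (enum_fset D)
  | Equal t1 t2 => teval nu t1 == teval nu t2
  | And p q => sat D dom nu p && sat D dom nu q
  | Ex x p => has (fun a => sat D dom (fun n => if n == x then a else nu n) p) dom
  end.

(** A graph database is represented as a finite set of pairs (a,b),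
   (a,b) standing for the fact E(a,b). The output variables x1, x2 of
   Phi_E(x1,x2) are the variables 0 and 1. *)
Definition graph := {fset (U * U)}.

Definition out_assign (a b : U) : nat -> U := fun n => if n == 0%N then a else b.

Definition is_sjf_graph_view (phi : cq) : Prop :=
  sjf phi /\ (forall x, x \in fv phi -> (x < 2)%N).

(* V(D): all E(a,b) with a,b in adom(D) u adom(Phi) and D |= Phi[a,b],
   active-domain semantics (quantifiers range over adom(D) u adom(Phi)) *)
Definition view (phi : cq) (D : instance) : graph :=
  let dom := adom D ++ consts phi in
  seq_fset tt [seq p <- [seq (a, b) | a <- dom, b <- dom]
              | sat D dom (out_assign p.1 p.2) phi].

End Schema.

(** D is in sjfCQ(BID): D is the push-forward of some BID-PDB (over some
    finite schema) under some sjfCQ-view. *)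
Definition in_sjfCQ_BID (Q : graph -> R) : Prop :=
  exists (S : finType) (ar : S -> nat) (P : instance ar -> R) (phi : cq S),
    is_BID P /\ is_sjf_graph_view ar phi /\
    forall J : graph, Q J = Pr P [set D | view phi D = J].

Definition edge_independent (Q : graph -> R) : Prop :=
  is_pdb Q /\
  (forall J : graph, 0 < Q J ->
     (forall a, (a, a) \notin J) /\ (forall a b, (a, b) \in J -> (b, a) \in J)) /\
  (forall s : seq (U * U),
     all (fun p => p.1 != p.2) s ->
     uniq [seq [fset p.1; p.2]%fset | p <- s] ->
     Pr Q [set J | forall p, p \in s -> p \in J]
       = \prod_(p <- s) Pr Q [set J | p \in J]) /\
  (forall n : nat, exists J : graph, 0 < Q J /\ (n < #|` J|)%N).

End PDB.

Definition infinite_type (U : countType) : Prop := forall s : seq U, exists u, u \notin s.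

From mathcomp Require Import all_boot all_order all_algebra finmap.
From mathcomp Require Import boolp classical_sets reals constructive_ereal ereal.
From mathcomp Require Import esum cardinality fsbigop lra.

Set Implicit Arguments.
Unset Strict Implicit.
Unset Printing Implicit Defensive.

Import Order.TTheory GRing.Theory Num.Theory.

(* Fix a world [D0] of the BID. By unboundedness some world [D1] has an edge
   [(a, b)] with [b] outside [adom D0]. Self-join freeness gives a witness [F] of
   the edge inside [D1] with at most one fact per relation symbol, and [F] yields
   the edge in every world containing it. Since worlds are loop-free and
   symmetric, merging the valuations [(a, b)] and [(b, a)] shows that every world
   containing [F] also contains a fact outside [F] mentioning [b]. But by block
   independence the worlds containing [F] and no new fact with [b] have
   probability at least [P D1 * P D0 > 0], as [D0] does not mention [b]. *)

Lemma mem_zip_fst (T1 T2 : eqType) (s : seq T1) (t : seq T2) x y :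
  (x, y) \in zip s t -> x \in s.
Proof.
by elim: s t => [|z s IH] [|w t] //=; rewrite !inE => /orP[/eqP[->]|/IH->]; rewrite ?eqxx ?orbT.
Qed.

Lemma mem_zip_snd (T1 T2 : eqType) (s : seq T1) (t : seq T2) x y :
  (x, y) \in zip s t -> y \in t.
Proof.
by elim: s t => [|z s IH] [|w t] //=; rewrite !inE => /orP[/eqP[_ ->]|/IH->]; rewrite ?eqxx ?orbT.
Qed.

Lemma mem_zip_diag (T : eqType) (s : seq T) x y : (x, y) \in zip s s -> x = y.
Proof. by rewrite -{1 2}(map_id s) zip_map => /mapP[z _ [-> ->]]. Qed.

Section ConjunctiveQuery.
Variables (U : countType) (S : finType) (ar : S -> nat).
Local Notation inst := (instance U ar).
Local Notation fct := (fact U ar).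
Local Open Scope fset_scope.

Lemma sat_atomP (D : inst) dom nu Rs ts :
  reflect (exists2 f : fct, f \in D & projT1 f = Rs /\ tval (projT2 f) = map (teval nu) ts)
          (sat D dom nu (Atom Rs ts)).
Proof.
apply: (iffP hasP) => [[f fD /andP[/eqP e1 /eqP e2]]|[f fD [e1 e2]]]; first by exists f.
by exists f => //; apply/andP; split; apply/eqP.
Qed.

Lemma sat_mono (D D' : inst) dom dom' nu (phi : cq U S) :
  {subset D <= D'} -> {subset dom <= dom'} -> sat D dom nu phi -> sat D' dom' nu phi.
Proof.
move=> DD' dd'; elim: phi nu => [Rs ts|t1 t2|p IHp q IHq|x p IHp] nu.
- by case/sat_atomP=> f /DD' fD' e; apply/sat_atomP; exists f.
- by [].
- by case/andP=> /IHp /= -> /IHq ->.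
- by case/hasP=> a /dd' ad /IHp h; apply/hasP; exists a.
Qed.

(* Conjunctive queries are preserved by homomorphisms; here [g] maps the product
   of [D1] and [D2] into [D], sending each pair of matching facts to its first
   component. *)
Lemma sat_merge (D1 D2 D : inst) dom1 dom2 dom (nu1 nu2 nu : nat -> U)
    (g : U -> U -> U) (phi : cq U S) :
  (forall u v, u \in dom1 -> v \in dom2 -> g u v \in dom) ->
  (forall c, c \in consts phi -> g c c = c) ->
  (forall f1 f2 : fct, f1 \in D1 -> f2 \in D2 -> projT1 f1 = projT1 f2 ->
     f1 \in D /\ forall p, p \in zip (tval (projT2 f1)) (tval (projT2 f2)) -> g p.1 p.2 = p.1) ->
  nu =1 (fun n => g (nu1 n) (nu2 n)) ->
  sat D1 dom1 nu1 phi -> sat D2 dom2 nu2 phi -> sat D dom nu phi.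
Proof.
move=> gdom; elim: phi nu1 nu2 nu => [Rs ts|t1 t2|p IHp q IHq|x p IHp] nu1 nu2 nu gc hf hnu.
- case/sat_atomP=> f1 f1D [e1 e2] /sat_atomP[f2 f2D [e1' e2']].
  have [f1D' gproj] := hf f1 f2 f1D f2D (etrans e1 (esym e1')).
  apply/sat_atomP; exists f1 => //; split => //; rewrite e2.
  move: gproj; rewrite e2 e2' zip_map; elim: ts {gc e2 e2'} => //= t ts IH gproj.
  rewrite IH => [|p hp]; last by apply: gproj; rewrite inE hp orbT.
  by case: t gproj => [n|c] gproj //=; rewrite hnu (gproj (nu1 n, nu2 n)) ?mem_head.
- case: t1 t2 gc => [n1|c1] [n2|c2] /= gc /eqP e1 /eqP e2; apply/eqP.
  + by rewrite !hnu e1 e2.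
  + by rewrite hnu e1 e2 gc // inE.
  + by rewrite hnu -e1 -e2 gc // inE.
  + by [].
- case/andP=> s1 s2 /andP[s1' s2'] /=.
  rewrite (IHp nu1 nu2 nu) ?(IHq nu1 nu2 nu) // => c hc; apply: gc.
    by rewrite mem_cat hc orbT.
  by rewrite mem_cat hc.
- case/hasP=> a1 a1d s1 /hasP[a2 a2d s2] /=; apply/hasP; exists (g a1 a2); first exact: gdom.
  by apply: (IHp _ _ _ gc hf _ s1 s2) => n; case: eqP.
Qed.

Lemma adomP (D : inst) u :
  reflect (exists2 f : fct, f \in D & u \in tval (projT2 f)) (u \in adom D).
Proof.
apply: (iffP flattenP) => [[s /mapP[f fD ->] uf]|[f fD uf]]; first by exists f.
by exists (tval (projT2 f)) => //; apply/mapP; exists f.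
Qed.

Lemma sub_adom (D D' : inst) : {subset D <= D'} -> {subset adom D <= adom D'}.
Proof. by move=> DD' u /adomP[f /DD' fD' uf]; apply/adomP; exists f. Qed.

Lemma sat_hom (F D : inst) dom dom' nu nu' (sg : U -> U) (phi : cq U S) :
  {subset F <= D} -> {in adom F ++ consts phi, sg =1 id} ->
  {in dom, forall u, sg u \in dom'} -> nu' =1 sg \o nu ->
  sat F dom nu phi -> sat D dom' nu' phi.
Proof.
move=> FD sgid sgdom hnu hs; apply: (sat_merge (g := fun u _ => sg u) _ _ _ hnu hs hs).
- by move=> u v /sgdom.
- by move=> c hc; apply: sgid; rewrite mem_cat hc orbT.
- move=> f1 f2 f1F _ _; split=> [|[x y] /mem_zip_fst xf1]; first exact: FD.
  by apply: sgid; rewrite mem_cat; apply/orP; left; apply/adomP; exists f1.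
Qed.

Definition functional (F : inst) :=
  {in F &, forall f f' : fct, projT1 f = projT1 f' -> f = f'}.

Lemma sat_functional_witness (D : inst) dom nu (phi : cq U S) :
  uniq (rels phi) -> sat D dom nu phi ->
  exists F : inst, [/\ {subset F <= D}, {in F, forall f : fct, projT1 f \in rels phi},
                      functional F & sat F dom nu phi].
Proof.
elim: phi nu => [Rs ts|t1 t2|p IHp q IHq|x p IHp] nu.
- move=> _ /sat_atomP[f fD [e1 e2]]; exists [fset f]; split=> [g|g|g g'|].
  + by rewrite in_fset1 => /eqP->.
  + by rewrite in_fset1 => /eqP->; rewrite e1 inE.
  + by rewrite !in_fset1 => /eqP-> /eqP->.
  + by apply/sat_atomP; exists f; rewrite ?in_fset1.
- by move=> _ h; exists fset0; split => // f; rewrite in_fset0.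
- rewrite /= cat_uniq => /and3P[up /hasPn hpq uq] /andP[sp sq].
  have [Fp [Fp1 Fp2 Fp3 Fp4]] := IHp nu up sp.
  have [Fq [Fq1 Fq2 Fq3 Fq4]] := IHq nu uq sq.
  exists (Fp `|` Fq); split.
  + by move=> f; rewrite in_fsetU => /orP[/Fp1|/Fq1].
  + by move=> f; rewrite in_fsetU mem_cat => /orP[/Fp2->|/Fq2->]; rewrite ?orbT.
  + move=> f f'; rewrite !in_fsetU => /orP[hf|hf] /orP[hf'|hf'] e.
    * exact: Fp3.
    * by move: (hpq _ (Fq2 _ hf')); rewrite -e Fp2.
    * by move: (hpq _ (Fq2 _ hf)); rewrite e Fp2.
    * exact: Fq3.
  + by rewrite (sat_mono _ _ Fp4) ?(sat_mono _ _ Fq4) // => f hf; rewrite in_fsetU hf ?orbT.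
- move=> urel /hasP[a ad /(IHp _ urel)[F [F1 F2 F3 F4]]].
  by exists F; split => //; apply/hasP; exists a.
Qed.

Lemma mem_view (phi : cq U S) (D : inst) a b :
  ((a, b) \in view phi D) =
  [&& a \in adom D ++ consts phi, b \in adom D ++ consts phi &
      sat D (adom D ++ consts phi) (out_assign a b) phi].
Proof.
rewrite seq_fsetE mem_filter /=; case: sat; rewrite ?andbT ?andbF //.
by apply/allpairsP/andP => [[[x y] /= [hx hy [-> ->]]]|[ha hb]] //; exists (a, b).
Qed.

End ConjunctiveQuery.

Section DiscreteProbability.
Local Open Scope classical_set_scope.
Local Open Scope ring_scope.
Variables (R : realType) (T : choiceType) (P : T -> R).
Hypothesis hP : is_pdb P.

Lemma pdb_ge0 D : 0 <= P D. Proof. by case: hP. Qed.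

Lemma Pr_EFin (A : set T) : (Pr P A)%:E = \esum_(D in A) (P D)%:E.
Proof.
have esum_ge0 : (0 <= \esum_(D in A) (P D)%:E)%E.
  by apply: esum_ge0 => D _; rewrite lee_fin pdb_ge0.
have esum_le1 : (\esum_(D in A) (P D)%:E <= 1)%E.
  case: hP => _ <-; rewrite esum_mkcond; apply: le_esum => D _.
  by case: ifP; rewrite ?lee_fin ?pdb_ge0.
by rewrite fineK // ge0_fin_numE // (le_lt_trans esum_le1) ?ltry.
Qed.

Lemma Pr_ge0 A : 0 <= Pr P A.
Proof. by rewrite -lee_fin Pr_EFin; apply: esum_ge0 => D _; rewrite lee_fin pdb_ge0. Qed.

Lemma Pr_setT : Pr P setT = 1.
Proof. by case: hP => _ h; rewrite /Pr h. Qed.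

Lemma Pr_setID (A B : set T) : Pr P A = Pr P (A `&` B) + Pr P (A `&` ~` B).
Proof.
by apply: EFin_inj; rewrite EFinD !Pr_EFin (esumID B) // => D _; rewrite lee_fin pdb_ge0.
Qed.

Lemma eq_Pr (A B : set T) : (forall D, A D <-> B D) -> Pr P A = Pr P B.
Proof. by move=> AB; congr Pr; apply/funext => D; apply/propext. Qed.

Lemma Pr_eq0 (A : set T) : (forall D, A D -> P D <= 0) -> Pr P A = 0.
Proof.
move=> A0; rewrite /Pr esum1 // => D /A0 PD0; congr (_%:E).
by apply/eqP; rewrite eq_le PD0 pdb_ge0.
Qed.

Lemma le_Pr (A B : set T) : (forall D, 0 < P D -> A D -> B D) -> Pr P A <= Pr P B.
Proof.
move=> AB; rewrite (Pr_setID A B) (Pr_eq0 (A := A `&` ~` B)); last first.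
  by move=> D [AD nBD]; rewrite leNgt; apply/negP => /AB /(_ AD).
by rewrite addr0 (Pr_setID B A) [B `&` A]setIC lerDl Pr_ge0.
Qed.

Lemma pdb_le_Pr (A : set T) D : A D -> P D <= Pr P A.
Proof.
move=> AD; rewrite -lee_fin Pr_EFin; apply: esum_ge; exists [set D].
  by split; [exact: finite_set1 | move=> x ->].
by rewrite fsbig_set1.
Qed.

Lemma Pr_gt0_world (A : set T) : 0 < Pr P A -> exists2 D, 0 < P D & A D.
Proof.
apply: contraPP => noworld; rewrite Pr_eq0 ?ltxx // => D AD; rewrite leNgt.
by apply/negP => PD; apply: noworld; exists D.
Qed.

Lemma Pr_notin_fset_small (e : R) :
  0 < e -> exists W : {fset T}, Pr P [set D | D \notin W] <= e.
Proof.
move=> e0; have : ((1 - e)%:E < \esum_(D in [set: T]) (P D)%:E)%E.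
  by case: hP => _ ->; rewrite lte_fin ltrBlDr ltrDl.
case/ereal_sup_gt=> _ [X [finX _] <-] hX; exists (fset_set X).
have := Pr_setID setT X; rewrite Pr_setT.
rewrite (eq_Pr (A := setT `&` ~` X) (B := [set D | D \notin fset_set X])); last first.
  by move=> D; rewrite /= (in_fset_set finX) notin_setE; split=> [[]|].
have : 1 - e < Pr P (setT `&` X).
  by rewrite -lte_fin Pr_EFin (lt_le_trans hX) //; apply: esum_ge; exists X.
lra.
Qed.

End DiscreteProbability.

Section BlockIndependence.
Local Open Scope classical_set_scope.
Local Open Scope ring_scope.
Variables (U : countType) (R : realType) (S : finType) (ar : S -> nat).
Local Notation inst := (instance U ar).
Local Notation fct := (fact U ar).
Variables (P : inst -> R) (blk : fct -> fct).
Hypothesis hP : is_pdb P.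
Hypothesis hind : forall fs : seq fct,
  (forall f, f \in fs -> facts_of P f) -> uniq (map blk fs) ->
  Pr P [set D | forall f, f \in fs -> f \in D] = \prod_(f <- fs) Pr P [set D | f \in D].
Hypothesis hexcl : forall f f' : fct, facts_of P f -> facts_of P f' -> f != f' ->
  blk f = blk f' -> Pr P [set D | f \in D /\ f' \in D] = 0.

Lemma world_blk_inj (D : inst) : 0 < P D -> {in D &, injective blk}.
Proof.
move=> PD f f' fD f'D eb.
have facts_D g : g \in D -> facts_of P g by move=> gD; exists D.
apply: contraTeq PD => nff'.
rewrite -leNgt -(hexcl (facts_D _ fD) (facts_D _ f'D) nff' eb).
exact: (pdb_le_Pr hP (conj fD f'D)).
Qed.

Definition clause_event (pos neg : seq fct) : set inst :=
  [set D | (forall f, f \in pos -> f \in D) /\ (forall g, g \in neg -> g \notin D)].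

Lemma Pr_clause_split pos neg y : Pr P (clause_event pos neg) =
  Pr P (clause_event (y :: pos) neg) + Pr P (clause_event pos (y :: neg)).
Proof.
rewrite (Pr_setID hP _ [set D | y \in D]); congr (_ + _); apply: eq_Pr => D /=.
  split=> [[[hpos hneg] yD]|[hpos hneg]].
    by split=> // f; rewrite inE => /orP[/eqP->|/hpos].
  split; last by apply: hpos; rewrite mem_head.
  by split=> // f hf; apply: hpos; rewrite inE hf orbT.
split=> [[[hpos hneg] /negP yD]|[hpos hneg]].
  by split=> // g; rewrite inE => /orP[/eqP->|/hneg].
split; last by apply/negP; apply: hneg; rewrite mem_head.
by split=> // g hg; apply: hneg; rewrite inE hg orbT.
Qed.

Lemma Pr_all_in (C : seq fct) : (forall f, f \in C -> facts_of P f) -> {in C &, injective blk} ->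
  Pr P (clause_event C [::]) = \prod_(f <- undup C) Pr P [set D | f \in D].
Proof.
move=> Cfacts Cinj; rewrite -hind.
- apply: eq_Pr => D; split=> [[hC _] f|hC]; first by rewrite mem_undup => /hC.
  by split=> // f fC; apply: hC; rewrite mem_undup.
- by move=> f; rewrite mem_undup => /Cfacts.
by rewrite map_inj_in_uniq ?undup_uniq // => f f'; rewrite !mem_undup; exact: Cinj.
Qed.

Lemma Pr_all_in_cat (A C : seq fct) (DA : inst) :
  0 < P DA -> {subset A <= DA} -> (forall f g, f \in A -> g \in C -> blk f != blk g) ->
  Pr P (clause_event (A ++ C) [::]) = Pr P (clause_event A [::]) * Pr P (clause_event C [::]).
Proof.
move=> PDA ADA Adisj.
have [[DC PDC CDC]|noDC] := pselect (exists2 DC, 0 < P DC & {subset C <= DC}); last first.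
  have null_pos pos : {subset C <= pos} -> Pr P (clause_event pos [::]) = 0.
    move=> Cpos; apply: (Pr_eq0 hP) => D [hpos _]; rewrite leNgt; apply/negP => PD.
    by apply: noDC; exists D => // f /Cpos /hpos.
  by rewrite (null_pos (A ++ C)) ?(null_pos C) ?mulr0 // => f fC; rewrite mem_cat fC orbT.
have Ainj := sub_in2 ADA (world_blk_inj PDA).
have Cinj := sub_in2 CDC (world_blk_inj PDC).
have Afacts f : f \in A -> facts_of P f by move/ADA => fD; exists DA; split.
have Cfacts f : f \in C -> facts_of P f by move/CDC => fD; exists DC; split.
have AnotC f : f \in A -> f \notin C.
  by move=> fA; apply/negP => fC; move: (Adisj f f fA fC); rewrite eqxx.
have ACinj : {in A ++ C &, injective blk}.
  move=> f f'; rewrite !mem_cat => /orP[fA|fC] /orP[f'A|f'C] eb; first exact: Ainj.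
  - by move: (Adisj f f' fA f'C); rewrite eb eqxx.
  - by move: (Adisj f' f f'A fC); rewrite eb eqxx.
  - exact: Cinj.
rewrite !Pr_all_in // ?undup_cat ?big_cat; last first.
  by move=> f; rewrite mem_cat => /orP[/Afacts|/Cfacts].
congr (_ * _); congr (\prod_(f <- _) _); apply/all_filterP/allP => f.
by rewrite mem_undup => /AnotC.
Qed.

Lemma Pr_clause_indep (A C Y : seq fct) (DA : inst) :
  0 < P DA -> {subset A <= DA} ->
  (forall f g, f \in A -> g \in C ++ Y -> blk f != blk g) ->
  Pr P (clause_event (A ++ C) Y) = Pr P (clause_event A [::]) * Pr P (clause_event C Y).
Proof.
move=> PDA ADA; elim: Y C => [|y Y IH] C Adisj.
  by apply: (Pr_all_in_cat PDA ADA) => f g fA gC; apply: Adisj; rewrite ?cats0.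
have Adisj_y f g : f \in A -> g \in (y :: C) ++ Y -> blk f != blk g.
  by move=> fA; rewrite /= inE mem_cat => /or3P[/eqP->|gC|gY]; apply: Adisj;
    rewrite // mem_cat ?inE ?eqxx ?gC ?gY ?orbT.
have Adisj' f g : f \in A -> g \in C ++ Y -> blk f != blk g.
  by move=> fA gCY; apply: Adisj_y; rewrite // /= inE gCY orbT.
have := Pr_clause_split (A ++ C) Y y.
have -> : Pr P (clause_event (y :: A ++ C) Y) = Pr P (clause_event (A ++ y :: C) Y).
  apply: eq_Pr => D; rewrite /clause_event /=.
  by split=> -[hpos hneg]; split=> // f hf; apply: hpos; move: hf; rewrite !(inE, mem_cat) orbCA.
by rewrite IH // IH // (Pr_clause_split C Y y) mulrDr => /addrI.
Qed.

(* Let [Y] collect the [q]-facts outside the blocks of [A] occurring in a finite set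
   [W] of worlds carrying almost all the mass. By block independence the event
   "all of [A], none of [Y]" has probability at least [P D1 * P D0]; without a
   world as claimed, this event would avoid [W]. *)
Lemma BID_world_avoiding (A : seq fct) (q : pred fct) (D0 D1 : inst) :
  0 < P D0 -> 0 < P D1 -> {subset A <= D1} -> (forall g, g \in D0 -> ~~ q g) ->
  exists D, [/\ 0 < P D, {subset A <= D} & forall g, g \in D -> q g -> g \in A].
Proof.
move=> PD0 PD1 AD1 D0q; apply: contrapT => noD.
pose e := P D1 * P D0 / 2.
have [W PW] : exists W : {fset inst}, Pr P [set D | D \notin W] <= e.
  by apply: (Pr_notin_fset_small hP); rewrite divr_gt0 ?mulr_gt0.
pose Y := [seq g <- flatten [seq enum_fset D | D <- enum_fset W] |
            q g && all (fun f => blk f != blk g) A].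
have indep : Pr P (clause_event A Y) = Pr P (clause_event A [::]) * Pr P (clause_event [::] Y).
  rewrite -(Pr_clause_indep PD1 AD1) ?cats0 // => f g fA.
  by rewrite mem_filter => /andP[/andP[_ /allP/(_ f fA)]].
have A_likely : P D1 <= Pr P (clause_event A [::]) by apply: (pdb_le_Pr hP); split.
have Y_likely : P D0 <= Pr P (clause_event [::] Y).
  apply: (pdb_le_Pr hP); split=> // g; rewrite mem_filter => /andP[/andP[qg _] _].
  by apply/negP => /D0q; rewrite qg.
have AY_unlikely : Pr P (clause_event A Y) <= Pr P [set D | D \notin W].
  apply: (le_Pr hP) => D PD [AD YD] /=; apply/negP => DW; apply: noD; exists D.
  split=> // g gD qg; apply: contraT => gA.
  have gY : g \in Y.
    rewrite mem_filter qg; apply/andP; split.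
      apply/allP => f fA; apply: contraNneq gA => eb.
      by rewrite -(world_blk_inj PD (AD f fA) gD eb).
    by apply/flattenP; exists (enum_fset D) => //; exact: map_f.
  by move: (YD g gY); rewrite gD.
have : P D1 * P D0 <= e.
  apply: le_trans PW; apply: le_trans AY_unlikely; rewrite indep.
  by apply: ler_pM => //; [exact: pdb_ge0 | exact: pdb_ge0].
have : 0 < P D1 * P D0 by rewrite mulr_gt0.
rewrite /e; move: (P D1 * P D0) => x; lra.
Qed.

End BlockIndependence.

Lemma card_fset_pairs_le (T : choiceType) (J : {fset T * T}) (K : seq T) :
  {in J, forall p, (p.1 \in K) && (p.2 \in K)} -> (#|` J| <= size K * size K)%N.
Proof.
move=> JK; rewrite -(size_allpairs pair K K); apply: uniq_leq_size (fset_uniq J) _.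
by case=> x y /JK /andP[xK yK]; apply/allpairsP; exists (x, y).
Qed.

Section SimpleView.
Local Open Scope classical_set_scope.
Local Open Scope ring_scope.
Variables (U : countType) (R : realType) (S : finType) (ar : S -> nat).
Local Notation inst := (instance U ar).
Local Notation fct := (fact U ar).
Variables (P : inst -> R) (Q : graph U -> R) (phi : cq U S).
Hypothesis hP : is_pdb P.
Hypothesis hQ : forall J : graph U, Q J = Pr P [set D | view phi D = J].
Hypothesis Qsimple : forall J : graph U, 0 < Q J ->
  (forall a, (a, a) \notin J) /\ (forall a b, (a, b) \in J -> (b, a) \in J).

Local Notation dom D := (adom D ++ consts phi).

Lemma sub_dom (F D : inst) : {subset F <= D} -> {subset dom F <= dom D}.
Proof. by move=> FD u; rewrite !mem_cat => /orP[/(sub_adom FD)->|->]; rewrite ?orbT. Qed.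

Lemma world_view_simple (D : inst) : 0 < P D ->
  (forall a, (a, a) \notin view phi D) /\
  (forall a b, (a, b) \in view phi D -> (b, a) \in view phi D).
Proof.
move=> PD; apply: (Qsimple (J := view phi D)).
by rewrite hQ (lt_le_trans PD) // (pdb_le_Pr hP).
Qed.

Lemma world_view_loop_free (D : inst) c : 0 < P D -> c \in dom D ->
  ~~ sat D (dom D) (out_assign c c) phi.
Proof. by move=> /world_view_simple[loopfree _] cD; move: (loopfree c); rewrite mem_view cD. Qed.

(* Otherwise renaming [c] to [d] would turn the edge into a loop. *)
Lemma witness_dom (F D : inst) a b c d :
  0 < P D -> {subset F <= D} -> sat F (dom D) (out_assign a b) phi ->
  {subset [:: a; b] <= [:: c; d]} -> d \in dom D -> c \in dom F.
Proof.
move=> PD FD Fsat abcd dD; apply: contraNT (world_view_loop_free PD dD) => cF.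
pose sg u := if u == c then d else u.
have sg_cd u : u \in [:: c; d] -> sg u = d by rewrite /sg !inE => /orP[|/eqP->]; case: eqP.
apply: (sat_hom (sg := sg) FD _ _ _ Fsat) => [u uF|u uD|n].
- by rewrite /sg; case: (u =P c) => // cu; move: cF; rewrite -cu uF.
- by rewrite /sg; case: ifP.
- have ab_n : out_assign a b n \in [:: a; b].
    by rewrite /out_assign; case: eqP; rewrite !inE eqxx ?orbT.
  by rewrite /= sg_cd ?abcd // /out_assign; case: eqP.
Qed.

Hypothesis hrels : uniq (rels phi).

Lemma view_witness (D1 : inst) a b : 0 < P D1 -> (a, b) \in view phi D1 ->
  exists F : inst, [/\ {subset F <= D1}, functional F, a \in dom F, b \in dom F &
    forall D, {subset F <= D} -> sat F (dom D) (out_assign a b) phi].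
Proof.
move=> PD1; rewrite mem_view => /and3P[aD1 bD1 /(sat_functional_witness hrels)].
case=> F [FD1 _ Ffun Fsat].
have aF : a \in dom F by apply: (witness_dom PD1 FD1 Fsat _ bD1).
have bF : b \in dom F by apply: (witness_dom PD1 FD1 Fsat _ aD1) => u; rewrite !inE orbC.
exists F; split=> // D FD; pose sg u := if u \in dom F then u else a.
apply: (sat_hom (sg := sg) _ _ _ _ Fsat) => // [u uF|u _|n].
- by rewrite /sg uF.
- by rewrite /sg; case: ifP => [uF|_]; apply: sub_dom FD _ _.
- by rewrite /= /sg /out_assign; case: eqP; rewrite ?aF ?bF.
Qed.

(* Otherwise merging the valuation [(a, b)] on [F] with [(b, a)] on [D] yields the
   loop [(b, b)] in [view phi D]: a fact of [D] outside [F] contains no [b], and a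
   fact of [F] only matches itself. *)
Lemma witness_forces_new_fact (F D : inst) a b :
  functional F -> a \in dom F -> b \in dom F ->
  sat F (dom D) (out_assign a b) phi -> 0 < P D -> {subset F <= D} ->
  ~ (forall g : fct, g \in D -> b \in tval (projT2 g) -> g \in F).
Proof.
move=> Ffun aF bF Fsat PD FD noNew.
have [aD bD] := (sub_dom FD aF, sub_dom FD bF).
have [_ sym] := world_view_simple PD.
have /sym : (a, b) \in view phi D by rewrite mem_view aD bD (sat_mono FD _ Fsat).
rewrite mem_view => /and3P[_ _ Dsat].
pose g u v := if (u == a) && (v == b) then b else u.
have g_diag u : g u u = u by rewrite /g; case: ifP => // /andP[/eqP-> /eqP->].
have /negP := world_view_loop_free PD bD; apply.
apply: (sat_merge (g := g) _ _ _ _ Fsat Dsat) => [u v uD _|c _|f1 f2 f1F f2D e|n].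
- by rewrite /g; case: ifP.
- exact: g_diag.
- split=> [|[x y] xy]; first exact: FD.
  have [f2F|f2F] := boolP (f2 \in F).
    by move: xy; rewrite (Ffun _ _ f1F f2F e) => /mem_zip_diag->; apply: g_diag.
  rewrite /g; case: eqP => //= _; case: eqP => // yb; move: f2F.
  by rewrite (noNew _ f2D) // -yb (mem_zip_snd xy).
- by rewrite /g /out_assign; case: eqP => _; rewrite ?eqxx //; case: ifP.
Qed.

Variable blk : fct -> fct.
Hypothesis hind : forall fs : seq fct,
  (forall f, f \in fs -> facts_of P f) -> uniq (map blk fs) ->
  Pr P [set D | forall f, f \in fs -> f \in D] = \prod_(f <- fs) Pr P [set D | f \in D].
Hypothesis hexcl : forall f f' : fct, facts_of P f -> facts_of P f' -> f != f' ->
  blk f = blk f' -> Pr P [set D | f \in D /\ f' \in D] = 0.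

Lemma view_vertex_in_adom (D0 D1 : inst) a b :
  0 < P D0 -> 0 < P D1 -> (a, b) \in view phi D1 -> b \in adom D0.
Proof.
move=> PD0 PD1 /(view_witness PD1)[F [FD1 Ffun aF bF Fsat]]; apply/negPn/negP => bD0.
have D0_no_b (g : fct) : g \in D0 -> b \notin tval (projT2 g).
  by move=> gD0; apply: contra bD0 => bg; apply/adomP; exists g.
have [D [PD FD noNew]] := BID_world_avoiding hP hind hexcl
  (q := fun g : fct => b \in tval (projT2 g)) PD0 PD1 FD1 D0_no_b.
exact: (witness_forces_new_fact Ffun aF bF (Fsat D FD) PD FD noNew).
Qed.

End SimpleView.

Theorem lemma7p10 (U : countType) (R : realType) (HU : infinite_type U)
  (Q : graph U -> R) :
  edge_independent Q -> ~ in_sjfCQ_BID Q.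
Proof.
move=> [_ [Qsimple [_ Qunbounded]]].
move=> [S [ar [P [phi [[hP [blk [hind hexcl]]] [[/andP[_ hrels] _] hQ]]]]]].
have [D0 PD0 _] : exists2 D0, (0 < P D0)%R & setT D0.
  by apply: (Pr_gt0_world hP); rewrite (Pr_setT hP) ltr01.
have [J [QJ]] := Qunbounded (size (adom D0) * size (adom D0)).
have [D1 PD1 <-] : exists2 D1, (0 < P D1)%R & view phi D1 = J.
  by apply: (Pr_gt0_world hP); rewrite -hQ.
apply/negP; rewrite -leqNgt; apply: card_fset_pairs_le => -[x y] xy /=.
have [_ sym] := world_view_simple hP hQ Qsimple PD1.
have in_adom0 := view_vertex_in_adom hP hQ Qsimple hrels hind hexcl PD0 PD1.
by rewrite (in_adom0 _ _ xy) (in_adom0 _ _ (sym _ _ xy)).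
Qed.
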